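(* There exists a constant $b>0$ such that for every $n,m\in\mathbb{N}^+$ and every sequence of samples $(x_1,y_1),\dots,(x_m,y_m)$ with $x_j\in\mathcal{B}^n$, $y_j\in\mathcal{B}$, which is consistent with some function $\mathcal{B}^n\to\mathcal{B}$ (i.e. $x_j=x_k$ implies $y_j=y_k$), there exists a Boolean circuit on $n$ inputs of size at most $bm$ that outputs $y_j$ on input $x_j$ for every $j=1,\dots,m$.
   Context: Let $\mathcal{B}=\{0,1\}$. A Boolean circuit on $n$ inputs is a DAG with a unique sink (output) whose sources are labelled by input indices in $\{1,\dots,n\}$ and whose other vertices (gates) are labelled AND, OR (two incoming edges) or NOT (one incoming edge); it computes a function $\mathcal{B}^n\to\mathcal{B}$ in the usual way; its size is its number of vertices. *)

From mathcomp Require Import all_boot.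
Set Implicit Arguments. Unset Strict Implicit. Unset Printing Implicit Defensive.

(* Boolean circuits on n inputs, represented as DAGs given in topological
   order (straight-line programs).  Vertex k (0-based) is a source labelled
   by an input index, or a gate whose incoming edges come from vertices with
   smaller index.  The sink (output) is the last vertex. *)
Inductive gate (n : nat) : Type :=
  | GInput of 'I_n
  | GNot of nat
  | GAnd of nat & nat
  | GOr of nat & nat.

Definition circuit (n : nat) := seq (gate n).

Definition preds n (g : gate n) : seq nat :=
  match g with
  | GInput _ => [::]
  | GNot i => [:: i]
  | GAnd i j => [:: i; j]
  | GOr i j => [:: i; j]
  end.

(* well-formed: nonempty, edges go from earlier vertices (acyclic), and the
   last vertex is the unique sink (every other vertex has an outgoing edge). *)
Definition wf_circuit n (c : circuit n) : bool :=
  [&& 0 < size c,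
      all (fun k => all (fun i => i < k) (preds (nth (GNot n 0) c k))) (iota 0 (size c))
    & all (fun i => has (fun k => i \in preds (nth (GNot n 0) c k)) (iota 0 (size c)))
          (iota 0 (size c).-1)].

Definition eval_gate n (x : n.-tuple bool) (vals : seq bool) (g : gate n) : bool :=
  match g with
  | GInput i => tnth x i
  | GNot i => ~~ nth false vals i
  | GAnd i j => nth false vals i && nth false vals j
  | GOr i j => nth false vals i || nth false vals j
  end.

Definition eval_all n (c : circuit n) (x : n.-tuple bool) : seq bool :=
  foldl (fun vals g => rcons vals (eval_gate x vals g)) [::] c.

Definition eval_circuit n (c : circuit n) (x : n.-tuple bool) : bool :=
  last false (eval_all c x).

Definition circuit_size n (c : circuit n) : nat := size c.

From mathcomp Require Import all_boot zify.
Set Implicit Arguments. Unset Strict Implicit. Unset Printing Implicit Defensive.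

(* A consistent sample of size m is fitted by a circuit with at most 10 m
   vertices; the circuit imitates a decision tree.  If all labels agree, the
   constant circuit x_i \/ ~x_i (or x_i /\ ~x_i, 4 vertices) fits.  Otherwise
   two samples with different labels have different inputs, which differ in
   some coordinate i; splitting the sample according to x_i yields two
   nonempty consistent subsamples, fitted recursively by circuits C1 and C0,
   and (x_i /\ C1) \/ (~x_i /\ C0) fits the whole sample.  This adds 6
   vertices, so the invariant "size <= 10 s - 6" survives the induction:
   (10 s1 - 6) + (10 s0 - 6) + 6 = 10 (s1 + s0) - 6.
   The file first develops the composition of circuits (renumbering vertices,
   joining two circuits under a binary gate: size, semantics and
   well-formedness), then the derived combinators (literals, constants,
   branching on an input), then the sample-fitting induction; the theorem is
   its instance for the sample (x j, y j)_j. *)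

Section Composition.
Variable n : nat.
Local Notation dflt := (GNot n 0).

Definition shift_gate (k : nat) (g : gate n) : gate n :=
  match g with
  | GInput i => GInput i
  | GNot i => GNot n (i + k)
  | GAnd i j => GAnd n (i + k) (j + k)
  | GOr i j => GOr n (i + k) (j + k)
  end.

Definition eval_step (x : n.-tuple bool) (vals : seq bool) (g : gate n) :=
  rcons vals (eval_gate x vals g).

Lemma preds_shift k g : preds (shift_gate k g) = map (addn^~ k) (preds g).
Proof. by case: g. Qed.

Lemma eval_gate_shift x vals w g :
  eval_gate x (vals ++ w) (shift_gate (size vals) g) = eval_gate x w g.
Proof. by case: g => [i|i|i j|i j] //=; rewrite !nth_cat ?ltnNge ?leq_addl //= ?addnK. Qed.

Lemma foldl_shift x vals w b :
  foldl (eval_step x) (vals ++ w) (map (shift_gate (size vals)) b)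
  = vals ++ foldl (eval_step x) w b.
Proof. by elim: b w => [|g b IH] w //=; rewrite /eval_step eval_gate_shift rcons_cat IH. Qed.

Lemma size_foldl_step x w b : size (foldl (eval_step x) w b) = size w + size b.
Proof. by elim: b w => [|g b IH] w /=; rewrite ?addn0 // IH size_rcons addSnnS. Qed.

Lemma size_eval_all (c : circuit n) x : size (eval_all c x) = size c.
Proof. exact: (size_foldl_step x [::] c). Qed.

Definition acyclic (c : circuit n) :=
  forall k, k < size c -> forall i, i \in preds (nth dflt c k) -> i < k.
Definition unique_sink (c : circuit n) :=
  forall i, i < (size c).-1 -> exists2 k, k < size c & i \in preds (nth dflt c k).

Lemma wf_circuitP c : wf_circuit c <-> [/\ 0 < size c, acyclic c & unique_sink c].
Proof.
split.
  case/and3P=> c0 /allP A /allP B; split=> // [k kc i|i ic].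
    by have /allP := A k ltac:(by rewrite mem_iota add0n); apply.
  have /hasP[k] := B i ltac:(by rewrite mem_iota add0n).
  by rewrite mem_iota add0n => kc ik; exists k.
case=> c0 A B; apply/and3P; split=> //.
  by apply/allP=> k; rewrite mem_iota add0n => kc; apply/allP => i; apply: A.
apply/allP=> i; rewrite mem_iota add0n => ic; apply/hasP.
by have [k kc ik] := B i ic; exists k; rewrite ?mem_iota ?add0n.
Qed.

(* [join G a b]: the circuit [a], then [b] renumbered behind it, then one gate
   [G] reading the two sinks of [a] and [b]. *)
Definition join (G : nat -> nat -> gate n) (a b : circuit n) : circuit n :=
  a ++ (map (shift_gate (size a)) b ++ [:: G (size a).-1 (size a + size b).-1]).

Lemma size_join G a b : size (join G a b) = size a + size b + 1.
Proof. by rewrite /join !size_cat size_map /= addnA. Qed.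

Lemma nth_join G a b k : nth dflt (join G a b) k =
  if k < size a then nth dflt a k
  else if k - size a < size b then shift_gate (size a) (nth dflt b (k - size a))
  else nth dflt [:: G (size a).-1 (size a + size b).-1] (k - size a - size b).
Proof.
rewrite /join nth_cat nth_cat size_map.
by case: ifP => // _; case: ifP => // kb; rewrite (nth_map dflt).
Qed.

Lemma eval_join G o a b x :
  (forall vals i j, eval_gate x vals (G i j) = o (nth false vals i) (nth false vals j)) ->
  0 < size a -> 0 < size b ->
  eval_circuit (join G a b) x = o (eval_circuit a x) (eval_circuit b x).
Proof.
move=> HG a0 b0; have sa := size_eval_all a x; have sb := size_eval_all b x.
have eval_ab : foldl (eval_step x) (eval_all a x) (map (shift_gate (size a)) b)
               = eval_all a x ++ eval_all b x.
  by have := foldl_shift x (eval_all a x) [::] b; rewrite cats0 sa.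
rewrite /eval_circuit /eval_all /join !foldl_cat -/(eval_all a x) eval_ab /=.
rewrite last_rcons HG !nth_cat sa -/(eval_all b x) -!(nth_last false) sa sb.
have -> : (size a).-1 < size a by lia.
have -> : (size a + size b).-1 < size a = false by lia.
by congr o; congr nth; lia.
Qed.

Section JoinWellFormed.
Variables (G : nat -> nat -> gate n) (a b : circuit n).
Hypothesis predsG : forall i j, preds (G i j) = [:: i; j].
Hypotheses (wf_a : wf_circuit a) (wf_b : wf_circuit b).

Lemma join_acyclic : acyclic (join G a b).
Proof.
have [a0 Aa _] := (wf_circuitP a).1 wf_a; have [_ Ab _] := (wf_circuitP b).1 wf_b.
move=> k; rewrite size_join nth_join => kc i.
case: ifP => [ka|ka]; first exact: Aa.
case: ifP => [kb|kb].
  by rewrite preds_shift => /mapP[i' /(Ab _ kb) ? ->]; lia.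
have -> : k - size a - size b = 0 by lia.
by rewrite /= predsG !inE => /orP[] /eqP ->; lia.
Qed.

Lemma join_unique_sink : unique_sink (join G a b).
Proof.
have [a0 _ Ba] := (wf_circuitP a).1 wf_a; have [b0 _ Bb] := (wf_circuitP b).1 wf_b.
move=> i; rewrite [in X in X -> _]size_join addn1 /= => ic.
have [ia|ai] := ltnP i (size a).-1.
  have [k ka ik] := Ba i ia; exists k; first by rewrite size_join; lia.
  by rewrite nth_join ka.
have read_by_G : i = (size a).-1 \/ i = (size a + size b).-1 ->
    exists2 k, k < size (join G a b) & i \in preds (nth dflt (join G a b) k).
  move=> Ei; exists (size a + size b); first by rewrite size_join; lia.
  rewrite nth_join ifF; last by lia.
  rewrite ifF; last by lia.
  have -> : size a + size b - size a - size b = 0 by lia.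
  by rewrite /= predsG !inE; case: Ei => ->; rewrite eqxx ?orbT.
have [Ei|ina] := eqVneq i (size a).-1; first by apply: read_by_G; left.
have [Ei|inb] := eqVneq i (size a + size b).-1; first by apply: read_by_G; right.
have [k kb ik] := Bb (i - size a) ltac:(lia).
exists (k + size a); first by rewrite size_join; lia.
rewrite nth_join ifF; last by lia.
rewrite addnK kb preds_shift.
have -> : i = (i - size a) + size a by lia.
exact: map_f.
Qed.

Lemma join_wf : wf_circuit (join G a b).
Proof.
apply/wf_circuitP; split; [|exact: join_acyclic|exact: join_unique_sink].
by rewrite size_join addn1.
Qed.

End JoinWellFormed.
End Composition.

Definition computes n (c : circuit n) (f : n.-tuple bool -> bool) :=
  wf_circuit c /\ forall x, eval_circuit c x = f x.

Lemma computes_ext n (c : circuit n) f g : computes c f -> f =1 g -> computes c g.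
Proof. by move=> [wc ec] fg; split=> // x; rewrite ec fg. Qed.

Lemma computes_lit n (i : 'I_n) : computes [:: GInput i] (fun x => tnth x i).
Proof. by []. Qed.

Lemma computes_nlit n (i : 'I_n) : computes [:: GInput i; GNot n 0] (fun x => ~~ tnth x i).
Proof. by []. Qed.

Lemma computes_join n G (o : bool -> bool -> bool) (a b : circuit n) f g :
  (forall i j, preds (G i j) = [:: i; j]) ->
  (forall x vals i j, eval_gate x vals (G i j) = o (nth false vals i) (nth false vals j)) ->
  computes a f -> computes b g -> computes (join G a b) (fun x => o (f x) (g x)).
Proof.
move=> predsG evalG [wa ea] [wb eb]; split; first exact: join_wf.
have [a0 _ _] := (wf_circuitP a).1 wa; have [b0 _ _] := (wf_circuitP b).1 wb.
by move=> x; rewrite (eval_join (o := o)) // ea eb.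
Qed.

Lemma computes_and n (a b : circuit n) f g : computes a f -> computes b g ->
  computes (join (GAnd n) a b) (fun x => f x && g x).
Proof. exact: computes_join. Qed.

Lemma computes_or n (a b : circuit n) f g : computes a f -> computes b g ->
  computes (join (GOr n) a b) (fun x => f x || g x).
Proof. exact: computes_join. Qed.

(* Constants need some input: x_i \/ ~x_i is true, x_i /\ ~x_i is false. *)
Lemma computes_const n (i : 'I_n) (v : bool) :
  exists2 c : circuit n, computes c (fun=> v) & size c = 4.
Proof.
case: v; [exists (join (GOr n) [:: GInput i] [:: GInput i; GNot n 0]) => //
          |exists (join (GAnd n) [:: GInput i] [:: GInput i; GNot n 0]) => //].
  by apply: computes_ext (computes_or (computes_lit i) (computes_nlit i)) _ => x; rewrite orbN.
by apply: computes_ext (computes_and (computes_lit i) (computes_nlit i)) _ => x; rewrite andbN.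
Qed.

Lemma computes_branch n (i : 'I_n) (c1 c0 : circuit n) f1 f0 :
  computes c1 f1 -> computes c0 f0 ->
  exists2 c : circuit n, computes c (fun x => if tnth x i then f1 x else f0 x)
                       & size c = size c1 + size c0 + 6.
Proof.
move=> h1 h0; eexists.
  apply: computes_ext (computes_or (computes_and (computes_lit i) h1)
                                   (computes_and (computes_nlit i) h0)) _.
  by move=> x; case: (tnth x i); rewrite ?orbF.
by rewrite !size_join /=; lia.
Qed.

Definition consistent n (s : seq (n.-tuple bool * bool)) :=
  forall p q, p \in s -> q \in s -> p.1 = q.1 -> p.2 = q.2.

Lemma consistent_filter n (s : seq (n.-tuple bool * bool)) P :
  consistent s -> consistent (filter P s).
Proof. by move=> cs p q; rewrite !mem_filter => /andP[_ ?] /andP[_ ?]; apply: cs. Qed.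

Lemma splitting_coordinate n (s : seq (n.-tuple bool * bool)) p0 q :
  consistent s -> p0 \in s -> q \in s -> q.2 != p0.2 ->
  exists i : 'I_n, has (fun p => tnth p.1 i) s && has (fun p => ~~ tnth p.1 i) s.
Proof.
move=> cs p0s qs qp0.
have [i ne_i] : exists i, tnth p0.1 i != tnth q.1 i.
  apply/existsP; apply: contraR qp0 => /existsPn same.
  suff /(cs _ _ qs p0s) -> : q.1 = p0.1 by [].
  by apply: eq_from_tnth => j; apply/esym/eqP; move: (same j); rewrite negbK.
have q_i : tnth q.1 i = ~~ tnth p0.1 i.
  by move: ne_i; case: (tnth p0.1 i); case: (tnth q.1 i).
exists i; apply/andP; split; apply/hasP; case p0_i: (tnth p0.1 i);
  by [exists p0; rewrite ?p0_i | exists q; rewrite ?q_i ?p0_i].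
Qed.

Definition fits n (c : circuit n) (s : seq (n.-tuple bool * bool)) :=
  forall p, p \in s -> eval_circuit c p.1 = p.2.

Lemma fit_sample n (i0 : 'I_n) (s : seq (n.-tuple bool * bool)) :
  0 < size s -> consistent s ->
  exists c : circuit n, [/\ wf_circuit c, size c <= 10 * size s - 6 & fits c s].
Proof.
have [k] := ubnP (size s); elim: k s => // k IH s sk s_pos cs.
have [p0 p0s] : exists p0, p0 \in s.
  by case: s s_pos {sk cs} => // p0 s' _; exists p0; rewrite mem_head.
have [same|/allPn[q qs qp0]] := boolP (all (fun p => p.2 == p0.2) s).
  have [c [wc ec] sc] := computes_const i0 p0.2.
  exists c; split=> [||p ps]; rewrite ?sc ?ec //; first by lia.
  exact/esym/eqP/(allP same).
have [i /andP[has1 has0]] := splitting_coordinate cs p0s qs qp0.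
pose s1 := filter (fun p => tnth p.1 i) s; pose s0 := filter (fun p => ~~ tnth p.1 i) s.
have split_size : size s1 + size s0 = size s by rewrite !size_filter count_predC.
have [pos1 pos0] : 0 < size s1 /\ 0 < size s0 by rewrite !size_filter -!has_count.
have [c1 [w1 z1 e1]] := IH s1 ltac:(lia) pos1 (consistent_filter cs).
have [c0 [w0 z0 e0]] := IH s0 ltac:(lia) pos0 (consistent_filter cs).
have [c [wc ec] sc] := computes_branch i (conj w1 (fun=> erefl)) (conj w0 (fun=> erefl)).
exists c; split=> [||p ps]; rewrite ?sc ?ec //; first by lia.
by case: (boolP (tnth p.1 i)) => h; [apply: e1|apply: e0]; rewrite mem_filter h.
Qed.

Theorem mainTheorem19 :
  exists b : nat, 0 < b /\
    forall (n m : nat), 0 < n -> 0 < m ->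
    forall (x : 'I_m -> n.-tuple bool) (y : 'I_m -> bool),
      (forall j k : 'I_m, x j = x k -> y j = y k) ->
      exists c : circuit n,
        [/\ wf_circuit c,
            circuit_size c <= b * m
          & forall j : 'I_m, eval_circuit c (x j) = y j].
Proof.
exists 10; split=> // n m n0 m0 x y xy.
pose s := [seq (x j, y j) | j <- enum 'I_m].
have size_s : size s = m by rewrite size_map size_enum_ord.
have cs : consistent s by move=> p q /mapP[j _ ->] /mapP[k _ ->]; apply: xy.
have [c [wc sc ec]] := fit_sample (Ordinal n0) (ltac:(lia) : 0 < size s) cs.
exists c; split=> // [|j]; first by rewrite /circuit_size; lia.
by apply: (ec (x j, y j)); apply: map_f; rewrite mem_enum.
Qed.
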